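(* Let $\Gamma$ be a two-stack automaton and let $\gamma=\gamma_1\cdots\gamma_n$ be a path in $\Gamma$. Then $\gamma$ is balanced if and only if there exists an involution $\pi_\gamma\in S_n$ such that: (1) $\rho(\gamma_i)=\varepsilon$ for all $i$ with $\pi_\gamma(i)=i$; (2) $\rho(\gamma_i)\in X\cup Y$ and $\rho(\gamma_{\pi_\gamma(i)})=\rho(\gamma_i)^{-1}$ for all $i$ with $\pi_\gamma(i)>i$; (3) there are no $i,j$ with $\rho(\gamma_i)\sim\rho(\gamma_j)$ and $i<j<\pi_\gamma(i)<\pi_\gamma(j)$. Moreover, for each balanced $\gamma$ such an involution $\pi_\gamma$ is unique.
   Context: Let $X=\{x_i: i\in\mathbb Z\}$, $X^{-1}=\{x_i^{-1}: i\in\mathbb Z\}$, and similarly $Y=\{y_i\}$, $Y^{-1}=\{y_i^{-1}\}$ be formal labels, and $\varepsilon$ a further label. Write $w_1\sim w_2$ if $w_1,w_2\in X\cup X^{-1}$ or $w_1,w_2\in Y\cup Y^{-1}$. A two-stack automaton is a finite directed graph $\Gamma$ with vertices $v_1,\dots,v_m$, each vertex $v$ labelled by $\rho(v)\in X\cup X^{-1}\cup Y\cup Y^{-1}\cup\{\varepsilon\}$, such that $\rho(v_1)=\rho(v_2)=\varepsilon$ and there is no edge $v_i\to v_j$ with $\rho(v_i)\sim\rho(v_j)$. A path $\gamma=\gamma_1\cdots\gamma_n$ is a sequence of vertices with $\gamma_t\to\gamma_{t+1}$ edges; its length is $n$ (the number of vertices). Traversing $\gamma$, keep two words $w_X\in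 X^*$, $w_Y\in Y^*$, initially empty; on entering a vertex with label $x_i$ append $x_i$ to $w_X$, with label $x_i^{-1}$ remove $x_i$ from the end of $w_X$ (similarly for $y_i$, $y_i^{-1}$ and $w_Y$), and with label $\varepsilon$ do nothing. The path is balanced if every step of this process is well defined (each removal removes the indicated letter from the end of the corresponding word) and both words are empty at the end. *)

From HB Require Import structures.
From mathcomp Require Import all_boot all_order all_algebra all_fingroup.
Set Implicit Arguments. Unset Strict Implicit. Unset Printing Implicit Defensive.

Inductive label : Type :=
  | LX of int | LXinv of int | LY of int | LYinv of int | Eps.

Definition label_eqb (a b : label) : bool :=
  match a, b with
  | LX i, LX j | LXinv i, LXinv j | LY i, LY j | LYinv i, LYinv j => i == j
  | Eps, Eps => true
  | _, _ => false
  end.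

Lemma label_eqP : Equality.axiom label_eqb.
Proof.
by case=> [i|i|i|i|] [j|j|j|j|] /=; try (by constructor);
  apply: (iffP eqP) => [->|[]].
Qed.

HB.instance Definition _ := hasDecEq.Build label label_eqP.

Definition isXlab (a : label) : bool :=
  match a with LX _ | LXinv _ => true | _ => false end.
Definition isYlab (a : label) : bool :=
  match a with LY _ | LYinv _ => true | _ => false end.
Definition sim (a b : label) : bool :=
  (isXlab a && isXlab b) || (isYlab a && isYlab b).

Definition positive_lab (a : label) : bool :=
  match a with LX _ | LY _ => true | _ => false end.

Definition lab_inv (a : label) : label :=
  match a with
  | LX i => LXinv i | LXinv i => LX i
  | LY i => LYinv i | LYinv i => LY i
  | Eps => Eps
  end.

(* Two-stack automaton on vertices 'I_m (v_1, v_2 are the ordinals 0, 1). *)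
Definition two_stack_automaton (m : nat) (edge : rel 'I_m)
    (rho : 'I_m -> label) : Prop :=
  [/\ 1 < m,
      (forall v : 'I_m, v < 2 -> rho v = Eps) &
      (forall u v : 'I_m, edge u v -> ~~ sim (rho u) (rho v))].

Definition is_path (m : nat) (edge : rel 'I_m) (n : nat)
    (gamma : 'I_n -> 'I_m) : Prop :=
  forall (t : 'I_n) (ht : t.+1 < n), edge (gamma t) (gamma (Ordinal ht)).

(* The two words w_X, w_Y, as sequences of indices (words read left to right,
   the end of the word is the last element). *)
Definition pop (w : seq int) (i : int) : option (seq int) :=
  if (w != [::]) && (last 0%R w == i) then Some (take (size w).-1 w) else None.

Definition step (ws : seq int * seq int) (a : label)
    : option (seq int * seq int) :=
  match a with
  | LX i => Some (rcons ws.1 i, ws.2)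
  | LXinv i => omap (fun w => (w, ws.2)) (pop ws.1 i)
  | LY i => Some (ws.1, rcons ws.2 i)
  | LYinv i => omap (fun w => (ws.1, w)) (pop ws.2 i)
  | Eps => Some ws
  end.

Definition run (s : seq label) : option (seq int * seq int) :=
  foldl (fun o a => obind (fun ws => step ws a) o) (Some ([::], [::])) s.

Definition balanced (m n : nat) (rho : 'I_m -> label) (gamma : 'I_n -> 'I_m)
    : bool :=
  run [seq rho (gamma t) | t <- enum 'I_n] == Some ([::], [::]).

Definition good_involution (m n : nat) (rho : 'I_m -> label)
    (gamma : 'I_n -> 'I_m) (pi : {perm 'I_n}) : Prop :=
  [/\ (forall i : 'I_n, pi (pi i) = i),
      (forall i : 'I_n, pi i = i -> rho (gamma i) = Eps),
      (forall i : 'I_n, i < pi i -> positive_lab (rho (gamma i)) /\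
                 rho (gamma (pi i)) = lab_inv (rho (gamma i))) &
      (~ exists i j : 'I_n, sim (rho (gamma i)) (rho (gamma j)) /\
                  [/\ i < j, j < pi i & pi i < pi j])].

From mathcomp Require Import all_boot all_order all_algebra all_fingroup.
Set Implicit Arguments. Unset Strict Implicit. Unset Printing Implicit Defensive.

(* Run the two stacks on positions of the path instead of letters. Pairing each
   closing letter with the position it pops gives an involution satisfying
   (1)-(3): (2) because a successful pop removes the inverse letter, and (3)
   because positions grow towards the top of a stack, so a position opened after
   i and still open when i is popped would lie above i. Conversely, for any
   involution with (1)-(3) the positions i < k with pi(i) >= k of each kind, in
   increasing order, form the position stack after k letters. So every closing
   letter k pops exactly pi(k): the path is balanced, and pi is determined. *)

Definition opener (c : bool) (a : label) : bool :=
  match a with LX _ => c | LY _ => ~~ c | _ => false end.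
Definition closer (c : bool) (a : label) : bool :=
  match a with LXinv _ => c | LYinv _ => ~~ c | _ => false end.
Definition idx (a : label) : int :=
  match a with LX i | LXinv i | LY i | LYinv i => i | Eps => 0%R end.

Lemma lab_invK : involutive lab_inv. Proof. by case. Qed.

Lemma label_cases (a : label) :
  [\/ a = Eps, opener (isXlab a) a | closer (isXlab a) a].
Proof. by case: a; constructor. Qed.

Lemma closer_opener c a : closer c a -> opener c a = false.
Proof. by case: a; case: c. Qed.

Lemma opener_positive c a : opener c a -> positive_lab a.
Proof. by case: a. Qed.

Lemma closer_lab_inv c a : opener c a -> closer c (lab_inv a).
Proof. by case: a. Qed.

Lemma opener_kind c a : opener c a -> isXlab a = c.
Proof. by case: a; case: c. Qed.

Lemma closer_kind c a : closer c a -> isXlab a = c.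
Proof. by case: a; case: c. Qed.

Lemma sim_opener c c' a b : opener c a -> opener c' b -> sim a b = (c == c').
Proof. by case: a; case: b; case: c; case: c'. Qed.

Lemma idx_eq_lab_inv c a b : opener c b -> closer c a ->
  (idx b == idx a) = (b == lab_inv a).
Proof. by case: a; case: b; case: c. Qed.

Lemma opener_lab_inv c a : closer c a -> opener c (lab_inv a).
Proof. by case: a. Qed.

Lemma lab_inv_positive a : positive_lab a -> positive_lab (lab_inv a) = false.
Proof. by case: a. Qed.

Lemma change_point (P : pred nat) a u : a <= u -> P a -> ~~ P u ->
  exists2 t, a <= t < u & P t && ~~ P t.+1.
Proof.
elim: u => [|u IH]; first by rewrite leqn0 => /eqP-> ->.
rewrite leq_eqVlt ltnS => /orP[/eqP-> -> //|hau hPa hPu].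
case hPu': (P u); first by exists u; rewrite ?hau ?ltnSn ?hPu'.
have [t /andP[hat htu] hP] := IH hau hPa (negbT hPu').
by exists t; rewrite // hat ltnS ltnW.
Qed.

Lemma last_in (T : eqType) (x : T) (l : seq T) : l != [::] -> last x l \in l.
Proof. by case: l => // y l _; rewrite /= mem_last. Qed.

Lemma sorted_rcons_ltn (l : seq nat) x y : sorted ltn (rcons l y) -> x \in l -> x < y.
Proof.
elim: l => [|a l IH] //= hs; rewrite in_cons => /orP[/eqP->|hx].
  by move: hs; rewrite (path_sortedE ltn_trans) all_rcons => /andP[/andP[]].
by apply: IH hx; apply: path_sorted hs.
Qed.

Section Stacks.

Variable s : seq label.
Local Notation lab i := (nth Eps s i).

(* The positions in [s] of the letters on the stack of kind [c] ([true] for [w_X]),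
   top last; [word] below turns it into the stack word. A bad pop is not detected
   here: [top_matches] records it. *)
Fixpoint stack (c : bool) (k : nat) : seq nat :=
  if k is k'.+1 then
    let st := stack c k' in
    if opener c (lab k') then rcons st k'
    else if closer c (lab k') then take (size st).-1 st else st
  else [::].

Lemma mem_stack c k i : i \in stack c k -> i < k /\ opener c (lab i).
Proof.
elim: k => [|k IH] //=; case: ifP => ho.
  by rewrite mem_rcons in_cons => /orP[/eqP-> //| /IH[/ltnW]].
by case: ifP => _ => [/mem_take|] /IH[/ltnW].
Qed.

Lemma stack_sorted c k : sorted ltn (stack c k).
Proof.
elim: k => [|k IH] //=; case: ifP => _; last by case: ifP => // _; exact: take_sorted.
case/lastP E: (stack c k) IH => [|l y] // hs.
rewrite -cats1 cat_rcons sorted_cat_cons hs /= andbT.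
by have /mem_stack[] : y \in stack c k by rewrite E mem_rcons mem_head.
Qed.

Lemma stack_push c i : opener c (lab i) -> i \in stack c i.+1.
Proof. by move=> /= ->; rewrite mem_rcons mem_head. Qed.

Lemma stack_pop c t x : x \in stack c t -> x \notin stack c t.+1 ->
  closer c (lab t) /\ x = last 0 (stack c t).
Proof.
move=> /= hx; case: ifP => _; first by rewrite mem_rcons in_cons hx orbT.
case: ifP => hc; last by rewrite hx.
case/lastP: (stack c t) hx => [|l y] //.
rewrite last_rcons size_rcons -cats1 take_size_cat // mem_cat inE.
by case/orP => [->|/eqP->].
Qed.

Lemma stack_popped c t x : closer c (lab t) -> x = last 0 (stack c t) ->
  x \notin stack c t.+1.
Proof.
move=> hc -> /=; rewrite (closer_opener hc) hc.
have := stack_sorted c t; case/lastP: (stack c t) => [|l y] // hs.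
rewrite last_rcons size_rcons -cats1 take_size_cat //.
by apply/negP => /(sorted_rcons_ltn hs); rewrite ltnn.
Qed.

Lemma notin_stack_mono c t u x : x < t -> t <= u -> x \notin stack c t ->
  x \notin stack c u.
Proof.
move=> hxt; elim: u => [|u IH]; first by rewrite leqn0 => /eqP E; rewrite E in hxt.
rewrite leq_eqVlt => /orP[/eqP<- //|htu] /(IH htu) /=.
case: ifP => _; first by rewrite mem_rcons in_cons negb_or neq_ltn (leq_trans hxt htu).
by case: ifP => // _; apply: contra; apply: mem_take.
Qed.

Lemma stack_le_top c t j : j \in stack c t -> j <= last 0 (stack c t).
Proof.
have := stack_sorted c t; case/lastP: (stack c t) => [|l y] // hs.
by rewrite last_rcons mem_rcons in_cons => /orP[/eqP-> //|/(sorted_rcons_ltn hs)/ltnW].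
Qed.

Definition top_matches c t :=
  closer c (lab t) ==>
    (stack c t != [::]) && (lab (last 0 (stack c t)) == lab_inv (lab t)).

Definition word c k := [seq idx (lab i) | i <- stack c k].

Lemma pop_word c k a : closer c a ->
  pop (word c k) (idx a) =
  if (stack c k != [::]) && (lab (last 0 (stack c k)) == lab_inv a)
  then Some [seq idx (lab i) | i <- take (size (stack c k)).-1 (stack c k)] else None.
Proof.
move=> hc; have := @mem_stack c k; rewrite /word.
case/lastP: (stack c k) => [|l y] // top_open.
have /top_open[_ hy] : y \in rcons l y by rewrite mem_rcons mem_head.
rewrite map_rcons /pop !last_rcons !size_rcons -!cats1 !take_size_cat ?size_map //.
by rewrite (idx_eq_lab_inv hy hc); case: (l) => [|? ?].
Qed.

Lemma step_word k :
  step (word true k, word false k) (lab k) =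
  if top_matches true k && top_matches false k
  then Some (word true k.+1, word false k.+1) else None.
Proof.
rewrite /top_matches /word /=; case E: (lab k) => [i|i|i|i|] /=.
- by rewrite map_rcons E.
- by rewrite (pop_word k (a := LXinv i)) // andbT; case: ifP.
- by rewrite map_rcons E.
- by rewrite (pop_word k (a := LYinv i)) //; case: ifP.
- by [].
Qed.

Lemma run_take k : k <= size s ->
  run (take k s) =
  if all (fun t => top_matches true t && top_matches false t) (iota 0 k)
  then Some (word true k, word false k) else None.
Proof.
elim: k => [|k IH] hk; first by rewrite take0.
rewrite (take_nth Eps hk) /run foldl_rcons -/(run _) IH ?(ltnW hk) //.
rewrite -addn1 iotaD all_cat /= andbT add0n.
by case: (all _ _); rewrite //= addn1 step_word.
Qed.

Lemma run_stacks : run s = Some ([::], [::]) <->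
  (forall c t, t < size s -> top_matches c t) /\ (forall c, stack c (size s) = [::]).
Proof.
rewrite -{1}(take_size s) run_take //; case: allP => [ok|nok]; last first.
  split=> // -[ok _]; case: nok => t; rewrite mem_iota => /andP[_ ht].
  by rewrite !ok.
rewrite /word; split.
- case; case E1: (stack true _) => //; case E2: (stack false _) => // _ _.
  split; last by case.
  by move=> c t ht; move: (ok t); rewrite mem_iota ht => /(_ isT)/andP[]; case: c.
- by case=> _ empty; rewrite !empty.
Qed.

End Stacks.

Definition good_pairing (s : seq label) (p : nat -> nat) :=
  [/\ forall i, i < size s -> p i < size s,
      forall i, i < size s -> p (p i) = i,
      forall i, i < size s -> p i = i -> nth Eps s i = Eps,
      forall i, i < size s -> i < p i ->
        positive_lab (nth Eps s i) /\ nth Eps s (p i) = lab_inv (nth Eps s i) &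
      forall i j, i < size s -> j < size s -> sim (nth Eps s i) (nth Eps s j) ->
        i < j -> j < p i -> p i < p j -> False].

Section GoodPairing.

Variables (s : seq label) (p : nat -> nat).
Hypothesis pairing : good_pairing s p.
Local Notation lab i := (nth Eps s i).

Lemma pairing_down i : i < size s -> p i < i ->
  positive_lab (lab (p i)) /\ lab i = lab_inv (lab (p i)).
Proof.
case: pairing => p_lt p_inv _ p_up _ hi hpi.
by have := p_up (p i) (p_lt i hi); rewrite p_inv // => /(_ hpi).
Qed.

Lemma pairing_eps i : i < size s -> lab i = Eps -> p i = i.
Proof.
case: (pairing) => _ _ _ p_up _ hi he.
case: (ltngtP i (p i)) => // [/(p_up i hi)[]|/(pairing_down hi)[]]; rewrite he //.
by case: (lab (p i)).
Qed.

Lemma pairing_positive i : i < size s -> positive_lab (lab i) -> i < p i.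
Proof.
case: (pairing) => _ _ p_fix _ _ hi hpos.
case: (ltngtP i (p i)) => // [/(pairing_down hi)[pos_pi E]|/esym/(p_fix i hi) E].
  by move: hpos; rewrite E (lab_inv_positive pos_pi).
by move: hpos; rewrite E.
Qed.

Lemma pairing_closer c i : i < size s -> closer c (lab i) ->
  [/\ p i < i, opener c (lab (p i)) & lab (p i) = lab_inv (lab i)].
Proof.
case: (pairing) => _ _ p_fix p_up _ hi hc.
case: (ltngtP i (p i)) => [/(p_up i hi)[]|/(pairing_down hi)[_ E]|/esym/(p_fix i hi) E].
- by case: (lab i) hc.
- by rewrite E lab_invK in hc *; split=> //; rewrite -[lab (p i)]lab_invK opener_lab_inv.
- by rewrite E in hc.
Qed.

Definition open_at c k := [seq i <- iota 0 k | opener c (lab i) && (k <= p i)].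

Lemma open_at_succ c k : k < size s -> ~~ closer c (lab k) ->
  open_at c k.+1 = if opener c (lab k) then rcons (open_at c k) k else open_at c k.
Proof.
case: (pairing) => p_lt _ _ p_up _ hk hc.
rewrite /open_at -addn1 iotaD filter_cat /= addn1 add0n.
have -> : [seq i <- iota 0 k | opener c (lab i) && (k < p i)] = open_at c k.
  apply: eq_in_filter => i; rewrite mem_iota /= => ik.
  case ho: (opener c (lab i)) => //=; rewrite [k <= p i]leq_eqVlt.
  case: eqP => //= pik; move: (ik) hc; rewrite pik => ipi.
  by have [_ ->] := p_up i (ltn_trans ik hk) ipi; rewrite (closer_lab_inv ho).
case ho: (opener c (lab k)); last by rewrite cats0.
by rewrite pairing_positive ?(opener_positive ho) ?cats1.
Qed.

Lemma open_at_closer c k : k < size s -> closer c (lab k) ->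
  open_at c k = rcons (open_at c k.+1) (p k).
Proof.
move=> hk hc; have [jk hj _] := pairing_closer hk hc.
case: (pairing) => p_lt p_inv _ _ noncross.
set j := p k in jk hj *; have pj : p j = k by apply: p_inv.
have p_ne_k i : i != j -> i < size s -> (k <= p i) = (k < p i).
  move=> ij hi; rewrite leq_eqVlt; case: eqP => //= pik.
  by move: ij; rewrite -(p_inv i hi) -pik eqxx.
have gap i : j < i < k -> opener c (lab i) -> p i < k.
  case/andP=> ji ik hi; have his : i < size s := ltn_trans ik hk.
  rewrite ltnNge p_ne_k ?(gtn_eqF ji) //; apply/negP => kpi.
  by apply: (noncross j i (ltn_trans jk hk) his); rewrite ?pj ?(sim_opener hj hi).
rewrite /open_at -addn1 iotaD filter_cat /= addn1 (closer_opener hc) cats0.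
have -> : iota 0 k = iota 0 j ++ j :: iota j.+1 (k - j.+1).
  by rewrite -{1}(subnKC jk) iotaD add0n -addn1 iotaD -catA.
rewrite !filter_cat /= hj pj leqnn ltnn /=.
have -> : [seq i <- iota j.+1 (k - j.+1) | opener c (lab i) && (k <= p i)] = [::].
  rewrite -(filter_pred0 (iota j.+1 (k - j.+1))); apply: eq_in_filter => i.
  rewrite mem_iota subnKC // => /gap; case: (opener _ _) => // /(_ isT).
  by rewrite ltnNge => /negbTE.
have -> : [seq i <- iota j.+1 (k - j.+1) | opener c (lab i) && (k < p i)] = [::].
  rewrite -(filter_pred0 (iota j.+1 (k - j.+1))); apply: eq_in_filter => i.
  rewrite mem_iota subnKC // => /gap; case: (opener _ _) => // /(_ isT).
  by move=> /ltnW; rewrite leqNgt => /negbTE.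
rewrite !cats0 cats1; congr rcons; apply: eq_in_filter => i; rewrite mem_iota /= => ij.
by rewrite p_ne_k ?(ltn_eqF ij) // (ltn_trans ij) // (ltn_trans jk).
Qed.

Lemma open_at_stack c k : k <= size s -> open_at c k = stack s c k.
Proof.
elim: k => [|k IH] hk //=; rewrite -IH ?(ltnW hk) //.
case hc: (closer c (lab k)).
  by rewrite (closer_opener hc) (open_at_closer hk hc) size_rcons -cats1 take_size_cat.
by rewrite (open_at_succ hk (negbT hc)); case: ifP.
Qed.

Lemma pairing_stack_closer c k : k < size s -> closer c (lab k) ->
  stack s c k = rcons (stack s c k.+1) (p k).
Proof. by move=> hk hc; rewrite -!open_at_stack ?(ltnW hk) // (open_at_closer hk hc). Qed.

Lemma pairing_closer_top c k : k < size s -> closer c (lab k) ->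
  p k = last 0 (stack s c k).
Proof. by move=> hk hc; rewrite (pairing_stack_closer hk hc) last_rcons. Qed.

Lemma good_pairing_balanced : run s = Some ([::], [::]).
Proof.
apply/run_stacks; split=> [c t ht|c].
  apply/implyP => hc; have [_ _ lab_pt] := pairing_closer ht hc.
  by rewrite (pairing_stack_closer ht hc) last_rcons lab_pt -size_eq0 size_rcons eqxx.
rewrite -open_at_stack // -(filter_pred0 (iota 0 (size s))); apply: eq_in_filter => i.
case: pairing => p_lt _ _ _ _; rewrite mem_iota /= => /p_lt.
by rewrite ltnNge => /negbTE ->; rewrite andbF.
Qed.

End GoodPairing.

Lemma good_pairing_unique s p q : good_pairing s p -> good_pairing s q ->
  forall i, i < size s -> p i = q i.
Proof.
move=> gp gq i hi; case: (label_cases (nth Eps s i)) => [E|ho|hc].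
- by rewrite (pairing_eps gp hi E) (pairing_eps gq hi E).
- have pi_lt : i < p i by rewrite (pairing_positive gp) ?(opener_positive ho).
  case: (gp) (gq) => p_lt p_inv _ p_up _ [_ q_inv _ _ _].
  have [_ E] := p_up i hi pi_lt.
  have hc : closer (isXlab (nth Eps s i)) (nth Eps s (p i)) by rewrite E closer_lab_inv.
  have pis : p i < size s := p_lt i hi.
  have qpi : q (p i) = i.
    by rewrite (pairing_closer_top gq pis hc) -(pairing_closer_top gp pis hc) p_inv.
  by rewrite -{2}qpi q_inv.
- by rewrite (pairing_closer_top gp hi hc) (pairing_closer_top gq hi hc).
Qed.

Section Mate.

Variable s : seq label.
Hypothesis balanced : run s = Some ([::], [::]).
Local Notation lab i := (nth Eps s i).

Lemma balanced_top c t : t < size s -> closer c (lab t) ->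
  last 0 (stack s c t) \in stack s c t /\ lab (last 0 (stack s c t)) = lab_inv (lab t).
Proof.
have [top_ok _] := proj1 (run_stacks s) balanced.
by move=> /(top_ok c) /implyP ok /ok /andP[/last_in-> /eqP].
Qed.

Definition pops c t i := closer c (lab t) && (last 0 (stack s c t) == i).

Lemma pops_stack c t i : t < size s -> pops c t i -> i \in stack s c t.
Proof.
by move=> ht /andP[hc /eqP<-]; have [] := balanced_top ht hc.
Qed.

Lemma opener_popped c i : i < size s -> opener c (lab i) ->
  exists2 t, i < t < size s & pops c t i.
Proof.
move=> hi ho; have [_ empty] := proj1 (run_stacks s) balanced.
have out_end : i \notin stack s c (size s) by rewrite empty.
have [t /andP[it ts] /andP[in_t out_t]] :=
  change_point (P := fun u => i \in stack s c u) hi (stack_push ho) out_end.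
have [hc top] := stack_pop in_t out_t.
by exists t; rewrite ?it ?ts // /pops hc -top eqxx.
Qed.

Lemma pops_inj c t t' i : t < size s -> t' < size s ->
  pops c t i -> pops c t' i -> t = t'.
Proof.
wlog lt_tt' : t t' / t < t' => [hwlog|] ht ht' hp hp'.
  case: (ltngtP t t') => // [lt|gt]; first exact: hwlog.
  by apply/esym/hwlog.
have [it _] := mem_stack (pops_stack ht hp).
case/andP: hp => hc /eqP top; have := stack_popped hc (esym top).
by move=> /(notin_stack_mono (t := t.+1) (ltnW it) lt_tt'); rewrite pops_stack.
Qed.

Lemma stack_until_popped c j t u : t < size s -> opener c (lab j) -> pops c t j ->
  j < u <= t -> j \in stack s c u.
Proof.
move=> ht ho hp /andP[ju ut]; apply/negPn/negP => out_u.
have [t0 /andP[jt0 t0u] /andP[in_t0 out_t0]] :=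
  change_point (P := fun u => j \in stack s c u) ju (stack_push ho) out_u.
have [hc top] := stack_pop in_t0 out_t0.
have t0t : t0 < t := leq_trans t0u ut.
have hp0 : pops c t0 j by rewrite /pops hc -top eqxx.
have t0_eq_t := pops_inj (ltn_trans t0t ht) ht hp0 hp.
by rewrite t0_eq_t ltnn in t0t.
Qed.

(* For an opening letter the filter has exactly one element, by [opener_popped]
   and [pops_inj]. *)
Definition mate (i : nat) : nat :=
  let a := lab i in let c := isXlab a in
  if opener c a then head i [seq t <- iota 0 (size s) | pops c t i]
  else if closer c a then last 0 (stack s c i) else i.

Lemma mate_opener c i : i < size s -> opener c (lab i) ->
  [/\ i < mate i, mate i < size s & pops c (mate i) i].
Proof.
move=> hi ho; rewrite /mate (opener_kind ho) ho.
have [t /andP[_ ts] hp] := opener_popped hi ho.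
have : t \in [seq t <- iota 0 (size s) | pops c t i] by rewrite mem_filter hp mem_iota.
case E: [seq _ <- _ | _] => [|m l] // _ /=.
have : m \in [seq t <- iota 0 (size s) | pops c t i] by rewrite E mem_head.
rewrite mem_filter mem_iota /= => /andP[hm hms].
by have [] := mem_stack (pops_stack hms hm).
Qed.

Lemma mate_closer c k : k < size s -> closer c (lab k) ->
  [/\ mate k < k, opener c (lab (mate k)), lab (mate k) = lab_inv (lab k)
     & pops c k (mate k)].
Proof.
move=> hk hc; have mk : mate k = last 0 (stack s c k).
  by rewrite /mate (closer_kind hc) (closer_opener hc) hc.
have [top_in lab_top] := balanced_top hk hc; rewrite -mk in top_in lab_top.
have [] := mem_stack top_in; split=> //.
by rewrite /pops hc mk eqxx.
Qed.

Lemma mate_eps i : lab i = Eps -> mate i = i.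
Proof. by rewrite /mate => ->. Qed.

Lemma mate_gt_opener i : i < size s -> i < mate i -> opener (isXlab (lab i)) (lab i).
Proof.
move=> hi; case: (label_cases (lab i)) => [E|//|hc]; first by rewrite mate_eps ?ltnn.
by have [/ltnW] := mate_closer hi hc; rewrite leqNgt => /negbTE->.
Qed.

Lemma mate_involutive_opener c i : i < size s -> opener c (lab i) -> mate (mate i) = i.
Proof.
move=> hi ho; have [_ js /andP[hc /eqP top]] := mate_opener hi ho.
by have [_ _ _ /andP[_ /eqP]] := mate_closer js hc; rewrite top.
Qed.

Lemma mate_good : good_pairing s mate.
Proof.
split.
- move=> i hi; case: (label_cases (lab i)) => [E|ho|hc]; first by rewrite mate_eps.
    by have [] := mate_opener hi ho.
  by have [mi _ _ _] := mate_closer hi hc; apply: ltn_trans mi hi.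
- move=> i hi; case: (label_cases (lab i)) => [E|ho|hc].
  + by rewrite !mate_eps.
  + exact: mate_involutive_opener ho.
  + have [ji ho _ hp] := mate_closer hi hc; have js := ltn_trans ji hi.
    have [_ ms hp'] := mate_opener js ho.
    exact: pops_inj ms hi hp' hp.
- move=> i hi fix_i; case: (label_cases (lab i)) => [//|ho|hc].
    by have [] := mate_opener hi ho; rewrite fix_i ltnn.
  by have [] := mate_closer hi hc; rewrite fix_i ltnn.
- move=> i hi lt_i; have ho := mate_gt_opener hi lt_i.
  split; first exact: opener_positive ho.
  have [_ js hc] := mate_opener hi ho; case/andP: hc => hc _.
  have [_ _ lab_m _] := mate_closer js hc.
  by rewrite (mate_involutive_opener hi ho) in lab_m; rewrite lab_m lab_invK.
- move=> i j hi hj hsim ij jmi mimj.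
  have hoi := mate_gt_opener hi (ltn_trans ij jmi).
  have hoj := mate_gt_opener hj (ltn_trans jmi mimj).
  rewrite (sim_opener hoi hoj) in hsim; rewrite -(eqP hsim) in hoj.
  have [_ mis /andP[_ /eqP top]] := mate_opener hi hoi.
  have [_ mjs hpj] := mate_opener hj hoj.
  have jm : j < mate i <= mate j by rewrite jmi ltnW.
  have := stack_le_top (stack_until_popped mjs hoj hpj jm).
  by rewrite top leqNgt ij.
Qed.

End Mate.

Section Involutions.

Variables (m n : nat) (rho : 'I_m -> label) (gamma : 'I_n -> 'I_m).
Local Notation labels := [seq rho (gamma t) | t <- enum 'I_n].

Lemma size_labels : size labels = n.
Proof. by rewrite size_map size_enum_ord. Qed.

Lemma nth_labels (t : 'I_n) : nth Eps labels t = rho (gamma t).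
Proof. by rewrite (nth_map t) ?size_enum_ord // nth_ord_enum. Qed.

Definition perm_fun (pi : {perm 'I_n}) (i : nat) : nat :=
  if insub i is Some t then val (pi t) else i.

Lemma perm_funE pi (t : 'I_n) : perm_fun pi t = pi t.
Proof. by rewrite /perm_fun valK. Qed.

Lemma good_involution_pairing pi :
  good_involution rho gamma pi -> good_pairing labels (perm_fun pi).
Proof.
case=> pi_inv pi_fix pi_up noncross; rewrite /good_pairing size_labels.
have ord_ind (Q : nat -> Prop) : (forall t : 'I_n, Q t) -> forall i, i < n -> Q i.
  by move=> Qt i hi; apply: (Qt (Ordinal hi)).
split; try apply: ord_ind => t; rewrite ?perm_funE ?nth_labels.
- exact: ltn_ord.
- by rewrite pi_inv.
- by move/val_inj/pi_fix.
- exact: pi_up.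
- move=> i j hi hj; rewrite -[i]/(val (Ordinal hi)) -[j]/(val (Ordinal hj)).
  rewrite !perm_funE !nth_labels => hsim ij jpi pij.
  by apply: noncross; exists (Ordinal hi), (Ordinal hj).
Qed.

Lemma good_pairing_involution p :
  good_pairing labels p -> exists pi : {perm 'I_n}, good_involution rho gamma pi.
Proof.
rewrite /good_pairing size_labels => -[p_lt p_inv p_fix p_up noncross].
pose f (t : 'I_n) := Ordinal (p_lt t (ltn_ord t)).
have f_inj : injective f.
  by move=> x y /(congr1 val) /= E; apply: ord_inj; rewrite -(p_inv x) // E p_inv.
exists (perm f_inj); split=> [i|i|i|[i [j [hsim [ij jpi pij]]]]]; rewrite ?permE.
- by apply: val_inj; rewrite /= p_inv.
- by move/(congr1 val) => /= /(p_fix i (ltn_ord i)); rewrite nth_labels.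
- by move=> /(p_up i (ltn_ord i)); rewrite !nth_labels (nth_labels (f i)).
- move: jpi pij; rewrite !permE => jpi pij.
  by apply: (noncross i j (ltn_ord i) (ltn_ord j)); rewrite ?nth_labels.
Qed.

End Involutions.

Theorem proposition2p2 (m : nat) (edge : rel 'I_m) (rho : 'I_m -> label)
    (n : nat) (gamma : 'I_n -> 'I_m) :
  two_stack_automaton edge rho -> is_path edge gamma ->
  (balanced rho gamma <-> exists pi : {perm 'I_n}, good_involution rho gamma pi) /\
  (balanced rho gamma -> forall pi1 pi2 : {perm 'I_n},
     good_involution rho gamma pi1 -> good_involution rho gamma pi2 -> pi1 = pi2).
Proof.
(* Only the label sequence of the path matters. *)
move=> _ _; rewrite /balanced; split; first split.
- by move/eqP/mate_good/good_pairing_involution.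
- by case=> pi /good_involution_pairing/good_pairing_balanced ->.
- move=> _ pi1 pi2 /good_involution_pairing g1 /good_involution_pairing g2.
  apply/permP => t; apply: ord_inj; rewrite -!perm_funE.
  by apply: good_pairing_unique g1 g2 _ _; rewrite size_labels.
Qed.
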